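(* Let $\mathcal{M}$ be an $n$-abelian category, let $X^0\xrightarrow{d_X^0}X^1\to\cdots\xrightarrow{d_X^{n-1}}X^n\xrightarrow{d_X^n}X^{n+1}$ be an $n$-exact sequence, let $Y^0\xrightarrow{d_Y^0}Y^1\to\cdots\xrightarrow{d_Y^{n-1}}Y^n$ be a complex with $d_Y^0$ a monomorphism, and let $(f^0,\dots,f^n)$ be a morphism of complexes from $X^0\to\cdots\to X^n$ to $Y^0\to\cdots\to Y^n$. The following are equivalent: (i) $(f^0,\dots,f^n)$ is an $n$-pushout diagram; (ii) its mapping cone is an $n$-exact sequence; (iii) it is both an $n$-pushout and an $n$-pullback diagram; (iv) there exists a morphism $d_Y^n:Y^n\to X^{n+1}$ with $d_Y^nf^n=d_X^n$ such that $Y^0\xrightarrow{d_Y^0}\cdots\xrightarrow{d_Y^{n-1}}Y^n\xrightarrow{d_Y^n}X^{n+1}$ is an $n$-exact sequence.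
   Context: A complex $X^0\xrightarrow{d^0}\cdots\xrightarrow{d^n}X^{n+1}$ is right $n$-exact if $0\to\mathcal{M}(X^{n+1},W)\to\cdots\to\mathcal{M}(X^0,W)$ is exact for all $W$, left $n$-exact if $0\to\mathcal{M}(W,X^0)\to\cdots\to\mathcal{M}(W,X^{n+1})$ is exact for all $W$, $n$-exact if both. For a morphism of complexes $f=(f^0,\dots,f^n)$ from $X^0\xrightarrow{d_X^0}\cdots\to X^n$ to $Y^0\xrightarrow{d_Y^0}\cdots\to Y^n$, its mapping cone is $X^0\to X^1\oplus Y^0\to\cdots\to X^n\oplus Y^{n-1}\to Y^n$ with differentials $\begin{pmatrix}-d_X^k&0\\ f^k&d_Y^{k-1}\end{pmatrix}$ ($d_X^n=0$, $d_Y^{-1}=0$ in this formula); $f$ is an $n$-pushout diagram if its mapping cone is right $n$-exact and an $n$-pullback diagram if its mapping cone is left $n$-exact. An $n$-abelian category is an idempotent complete additive category in which every morphism has an $n$-kernel and an $n$-cokernel, and in which every monomorphism (resp. epimorphism) together with any of its $n$-cokernels (resp. $n$-kernels) forms an $n$-exact sequence. *)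

From HB Require Import structures.
From mathcomp Require Import all_boot all_algebra.

Set Implicit Arguments.
Unset Strict Implicit.
Unset Printing Implicit Defensive.

Import GRing.Theory.
Local Open Scope ring_scope.

Record AddCat := AddCatMk {
  Obj :> Type;
  Mor : Obj -> Obj -> zmodType;
  mcomp : forall X Y Z : Obj, Mor Y Z -> Mor X Y -> Mor X Z;
  idm : forall X : Obj, Mor X X;
  compA : forall (X Y Z W : Obj) (h : Mor Z W) (g : Mor Y Z) (f : Mor X Y),
      mcomp h (mcomp g f) = mcomp (mcomp h g) f;
  comp1m : forall (X Y : Obj) (f : Mor X Y), mcomp (idm Y) f = f;
  compm1 : forall (X Y : Obj) (f : Mor X Y), mcomp f (idm X) = f;
  compDl : forall (X Y Z : Obj) (g1 g2 : Mor Y Z) (f : Mor X Y),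
      mcomp (g1 + g2) f = mcomp g1 f + mcomp g2 f;
  compDr : forall (X Y Z : Obj) (g : Mor Y Z) (f1 f2 : Mor X Y),
      mcomp g (f1 + f2) = mcomp g f1 + mcomp g f2;
  zobj : Obj;
  zobj_id : idm zobj = 0;
  bip : Obj -> Obj -> Obj;
  inj1 : forall X Y : Obj, Mor X (bip X Y);
  inj2 : forall X Y : Obj, Mor Y (bip X Y);
  pr1 : forall X Y : Obj, Mor (bip X Y) X;
  pr2 : forall X Y : Obj, Mor (bip X Y) Y;
  pr1inj1 : forall X Y : Obj, mcomp (pr1 X Y) (inj1 X Y) = idm X;
  pr2inj2 : forall X Y : Obj, mcomp (pr2 X Y) (inj2 X Y) = idm Y;
  pr1inj2 : forall X Y : Obj, mcomp (pr1 X Y) (inj2 X Y) = 0;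
  pr2inj1 : forall X Y : Obj, mcomp (pr2 X Y) (inj1 X Y) = 0;
  bip_id : forall X Y : Obj,
      mcomp (inj1 X Y) (pr1 X Y) + mcomp (inj2 X Y) (pr2 X Y) = idm (bip X Y)
}.

Arguments Mor {_} _ _.
Arguments mcomp {_ _ _ _} _ _.
Arguments idm {_} _.
Arguments zobj {_}.
Arguments bip {_} _ _.
Arguments inj1 {_ X Y}.
Arguments inj2 {_ X Y}.
Arguments pr1 {_ X Y}.
Arguments pr2 {_ X Y}.

Section NAbelian.
Variable C : AddCat.

Definition mono (X Y : C) (f : Mor X Y) : Prop :=
  forall (W : C) (g h : Mor W X), mcomp f g = mcomp f h -> g = h.

Definition epi (X Y : C) (f : Mor X Y) : Prop :=
  forall (W : C) (g h : Mor Y W), mcomp g f = mcomp h f -> g = h.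

Definition castHom (X X' Y Y' : C) (eX : X = X') (eY : Y = Y') (f : Mor X Y)
  : Mor X' Y' :=
  match eX in _ = X0, eY in _ = Y0 return Mor X0 Y0 with
  | erefl, erefl => f end.

(* Sequences.  Throughout, n = m.+1 (n >= 1).  A sequence               *)
(*   X^0 -d^0-> X^1 -> ... -> X^n -d^n-> X^{n+1}                        *)
(* is given by  X : nat -> C  (objects X 0, ..., X n),                  *)
(*   d : forall k, Mor (X k) (X k.+1)  (d^k = d k for k < n),           *)
(*   L : C  (= X^{n+1}) and  e : Mor (X n) L  (= d^n).                  *)

Unset Implicit Arguments.

(* right n-exact:  0 -> M(X^{n+1},W) -> M(X^n,W) -> ... -> M(X^0,W)
   is exact for all W (exactness at M(X^k,W), 1 <= k <= n+1). *)
Definition right_nexact (m : nat) (X : nat -> C)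
    (d : forall k, Mor (X k) (X k.+1)) (L : C) (e : Mor (X m.+1) L) : Prop :=
  [/\
      forall (W : C) (g : Mor L W), mcomp g e = 0 -> g = 0,
      forall (W : C) (g : Mor (X m.+1) W),
        mcomp g (d m) = 0 <-> exists h : Mor L W, g = mcomp h e &
      (* exactness at M(X^k,W), k = j+1, 1 <= k < n *)
      forall j, (j < m)%N -> forall (W : C) (g : Mor (X j.+1) W),
        mcomp g (d j) = 0 <-> exists h : Mor (X j.+2) W, g = mcomp h (d j.+1)].

(* left n-exact:  0 -> M(W,X^0) -> M(W,X^1) -> ... -> M(W,X^{n+1})
   is exact for all W (exactness at M(W,X^k), 0 <= k <= n). *)
Definition left_nexact (m : nat) (X : nat -> C)
    (d : forall k, Mor (X k) (X k.+1)) (L : C) (e : Mor (X m.+1) L) : Prop :=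
  [/\
      forall (W : C) (g : Mor W (X 0)), mcomp (d 0%N) g = 0 -> g = 0,
      (* exactness at M(W,X^k), k = j+1, 1 <= k < n *)
      forall j, (j < m)%N -> forall (W : C) (g : Mor W (X j.+1)),
        mcomp (d j.+1) g = 0 <-> exists h : Mor W (X j), g = mcomp (d j) h &
      forall (W : C) (g : Mor W (X m.+1)),
        mcomp e g = 0 <-> exists h : Mor W (X m), g = mcomp (d m) h].


Definition nexact m X d L e : Prop :=
  right_nexact m X d L e /\ left_nexact m X d L e.


Set Implicit Arguments.

Definition idempotent_complete : Prop :=
  forall (X : C) (p : Mor X X), mcomp p p = p ->
    exists (Y : C) (r : Mor X Y) (s : Mor Y X), mcomp r s = idm Y /\ mcomp s r = p.

Definition has_nkernel (m : nat) (A B : C) (f : Mor A B) : Prop :=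
  exists (X : nat -> C) (d : forall k, Mor (X k) (X k.+1)) (eA : A = X m.+1),
    left_nexact m X d B (castHom eA (erefl B) f).

Definition has_ncokernel (m : nat) (A B : C) (f : Mor A B) : Prop :=
  exists (X : nat -> C) (d : forall k, Mor (X k) (X k.+1)) (L : C)
         (e : Mor (X m.+1) L) (eA : A = X 0%N) (eB : B = X 1%N),
    d 0%N = castHom eA eB f /\ right_nexact m X d L e.

Definition nAbelian (m : nat) : Prop :=
  [/\ idempotent_complete,
      forall (A B : C) (f : Mor A B), has_nkernel m f,
      forall (A B : C) (f : Mor A B), has_ncokernel m f,
      forall X d L e, mono (d 0%N) -> right_nexact m X d L e -> nexact m X d L e &
      forall X d L e, epi e -> left_nexact m X d L e -> nexact m X d L e].

Definition col2 (A B1 B2 : C) (a : Mor A B1) (c : Mor A B2) : Mor A (bip B1 B2) :=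
  mcomp inj1 a + mcomp inj2 c.
Definition row2 (A1 A2 B : C) (c : Mor A1 B) (d : Mor A2 B) : Mor (bip A1 A2) B :=
  mcomp c pr1 + mcomp d pr2.
(* matrix [[a, b], [c, d]] : A1 (+) A2 -> B1 (+) B2 *)
Definition mx2 (A1 A2 B1 B2 : C) (a : Mor A1 B1) (b : Mor A2 B1)
    (c : Mor A1 B2) (d : Mor A2 B2) : Mor (bip A1 A2) (bip B1 B2) :=
  mcomp inj1 (mcomp a pr1 + mcomp b pr2) + mcomp inj2 (mcomp c pr1 + mcomp d pr2).

(* Mapping cone of f = (f^0,...,f^n) : (X^0 -> ... -> X^n) -> (Y^0 -> ... -> Y^n):
   X^0 -> X^1 (+) Y^0 -> ... -> X^n (+) Y^{n-1} -> Y^n,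
   with differentials [[-d_X^k, 0], [f^k, d_Y^{k-1}]]
   (d_X^n = 0, d_Y^{-1} = 0, so the first is the column (-d_X^0; f^0)
    and the last is the row (f^n  d_Y^{n-1})).                          *)
Section Cone.
Variables (m : nat) (X Y : nat -> C) (dX : forall k, Mor (X k) (X k.+1))
  (dY : forall k, Mor (Y k) (Y k.+1)) (f : forall k, Mor (X k) (Y k)).

(* objects C^0, ..., C^n ; C^{n+1} = Y^n is given separately *)
Definition cone_obj (k : nat) : C :=
  match k with 0 => X 0%N | j.+1 => bip (X j.+1) (Y j) end.

Definition cone_d (k : nat) : Mor (cone_obj k) (cone_obj k.+1) :=
  match k as k0 return Mor (cone_obj k0) (cone_obj k0.+1) with
  | 0 => col2 (- dX 0%N) (f 0%N)
  | j.+1 => mx2 (- dX j.+1) 0 (f j.+1) (dY j)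
  end.

Definition cone_last : Mor (cone_obj m.+1) (Y m.+1) := row2 (f m.+1) (dY m).

End Cone.

End NAbelian.

Arguments right_nexact {C} m X d L e.
Arguments left_nexact {C} m X d L e.
Arguments nexact {C} m X d L e.

From Pilot Require Import Defs.
From mathcomp Require Import all_boot all_algebra.

Set Implicit Arguments.
Unset Strict Implicit.
Unset Printing Implicit Defensive.
Import GRing.Theory.
Local Open Scope ring_scope.

(* Since d_X^0 is a monomorphism, so is the first differential (-d_X^0; f^0)
   of the cone; hence a right n-exact cone is n-exact by the n-abelian axiom
   for monomorphisms.  Conversely, right exactness of the cone at X^n (+) Y^{n-1}
   factors (d_X^n 0) through the last differential (f^n d_Y^{n-1}), which
   produces d_Y^n with d_Y^n f^n = d_X^n and makes Y^0 -> ... -> Y^n -> X^{n+1}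
   right n-exact, hence n-exact as d_Y^0 is mono.  Finally, if this extended
   sequence is n-exact, a diagram chase shows that the cone is left n-exact
   and that its last differential is an epimorphism, so the cone is n-exact
   by the n-abelian axiom for epimorphisms. *)

Section AdditiveCategory.
Variable C : AddCat.

Lemma comp0m (A B W : C) (g : Mor A B) : mcomp (0 : Mor B W) g = 0.
Proof.
have h := compDl (0 : Mor B W) 0 g; rewrite addr0 in h.
by apply: (addrI (mcomp (0 : Mor B W) g)); rewrite addr0 -h.
Qed.

Lemma compm0 (A B W : C) (g : Mor B W) : mcomp g (0 : Mor A B) = 0.
Proof.
have h := compDr g (0 : Mor A B) 0; rewrite addr0 in h.
by apply: (addrI (mcomp g (0 : Mor A B))); rewrite addr0 -h.
Qed.

Lemma compNl (A B W : C) (g : Mor B W) (h : Mor A B) :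
  mcomp (- g) h = - mcomp g h.
Proof. by apply/eqP; rewrite -addr_eq0 -compDl addNr comp0m. Qed.

Lemma compNr (A B W : C) (g : Mor B W) (h : Mor A B) :
  mcomp g (- h) = - mcomp g h.
Proof. by apply/eqP; rewrite -addr_eq0 -compDr addNr compm0. Qed.

Lemma mono_eq0 (A B : C) (g : Mor A B) :
  mono g -> forall (W : C) (h : Mor W A), mcomp g h = 0 -> h = 0.
Proof. by move=> gM W h gh0; apply: gM; rewrite gh0 compm0. Qed.

Lemma eq0_mono (A B : C) (g : Mor A B) :
  (forall (W : C) (h : Mor W A), mcomp g h = 0 -> h = 0) -> mono g.
Proof.
move=> g0 W h1 h2 e; apply/eqP; rewrite -subr_eq0; apply/eqP; apply: g0.
by rewrite compDr compNr e subrr.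
Qed.

Lemma eq0_epi (A B : C) (g : Mor A B) :
  (forall (W : C) (h : Mor B W), mcomp h g = 0 -> h = 0) -> epi g.
Proof.
move=> g0 W h1 h2 e; apply/eqP; rewrite -subr_eq0; apply/eqP; apply: g0.
by rewrite compDl compNl e subrr.
Qed.

Lemma pr1_col2 (A B1 B2 : C) (a : Mor A B1) (c : Mor A B2) :
  mcomp pr1 (col2 a c) = a.
Proof. by rewrite /col2 compDr !Defs.compA pr1inj1 pr1inj2 comp1m comp0m addr0. Qed.

Lemma pr2_col2 (A B1 B2 : C) (a : Mor A B1) (c : Mor A B2) :
  mcomp pr2 (col2 a c) = c.
Proof. by rewrite /col2 compDr !Defs.compA pr2inj1 pr2inj2 comp1m comp0m add0r. Qed.

Lemma row2_inj1 (A1 A2 B : C) (c : Mor A1 B) (d : Mor A2 B) :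
  mcomp (row2 c d) inj1 = c.
Proof. by rewrite /row2 compDl -!Defs.compA pr1inj1 pr2inj1 compm1 compm0 addr0. Qed.

Lemma row2_inj2 (A1 A2 B : C) (c : Mor A1 B) (d : Mor A2 B) :
  mcomp (row2 c d) inj2 = d.
Proof. by rewrite /row2 compDl -!Defs.compA pr1inj2 pr2inj2 compm1 compm0 add0r. Qed.

Lemma col2_pr (W B1 B2 : C) (g : Mor W (bip B1 B2)) :
  col2 (mcomp pr1 g) (mcomp pr2 g) = g.
Proof. by rewrite /col2 !Defs.compA -compDl bip_id comp1m. Qed.

Lemma row2_inj (A1 A2 W : C) (g : Mor (bip A1 A2) W) :
  row2 (mcomp g inj1) (mcomp g inj2) = g.
Proof. by rewrite /row2 -!Defs.compA -compDr bip_id compm1. Qed.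

Lemma col2_comp (V A B1 B2 : C) (a : Mor A B1) (c : Mor A B2) (h : Mor V A) :
  mcomp (col2 a c) h = col2 (mcomp a h) (mcomp c h).
Proof. by rewrite /col2 compDl -!Defs.compA. Qed.

Lemma comp_row2 (A1 A2 B W : C) (h : Mor B W) (c : Mor A1 B) (d : Mor A2 B) :
  mcomp h (row2 c d) = row2 (mcomp h c) (mcomp h d).
Proof. by rewrite /row2 compDr !Defs.compA. Qed.

Lemma row2_col2 (V A1 A2 B : C) (c : Mor A1 B) (d : Mor A2 B)
    (a : Mor V A1) (b : Mor V A2) :
  mcomp (row2 c d) (col2 a b) = mcomp c a + mcomp d b.
Proof. by rewrite /row2 compDl -!Defs.compA pr1_col2 pr2_col2. Qed.

Lemma col2_0 (V A1 A2 : C) : col2 (0 : Mor V A1) (0 : Mor V A2) = 0.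
Proof. by rewrite /col2 !compm0 addr0. Qed.

Lemma row2_0 (A1 A2 W : C) : row2 (0 : Mor A1 W) (0 : Mor A2 W) = 0.
Proof. by rewrite /row2 !comp0m addr0. Qed.

Lemma row2D (A1 A2 W : C) (a a' : Mor A1 W) (b b' : Mor A2 W) :
  row2 a b + row2 a' b' = row2 (a + a') (b + b').
Proof. by rewrite /row2 !compDl addrACA. Qed.

Lemma col2_eq0 (V A1 A2 : C) (a : Mor V A1) (b : Mor V A2) :
  col2 a b = 0 -> a = 0 /\ b = 0.
Proof.
by move=> ab0; split; [rewrite -(pr1_col2 a b) | rewrite -(pr2_col2 a b)];
  rewrite ab0 compm0.
Qed.

Lemma row2_inj_eq (A1 A2 W : C) (a a' : Mor A1 W) (b b' : Mor A2 W) :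
  row2 a b = row2 a' b' -> a = a' /\ b = b'.
Proof.
by move=> e; split; [rewrite -(row2_inj1 a b) | rewrite -(row2_inj2 a b)];
  rewrite e ?row2_inj1 ?row2_inj2.
Qed.

Lemma row2_eq0 (A1 A2 W : C) (a : Mor A1 W) (b : Mor A2 W) :
  row2 a b = 0 -> a = 0 /\ b = 0.
Proof. by rewrite -row2_0 => /row2_inj_eq. Qed.

End AdditiveCategory.

Section Exactness.
Variables (C : AddCat) (m : nat) (Z : nat -> C) (d : forall k, Mor (Z k) (Z k.+1)).

Lemma left_nexact_complex (L : C) (e : Mor (Z m.+1) L) :
  left_nexact m Z d L e ->
  (forall k, (k < m)%N -> mcomp (d k.+1) (d k) = 0) /\ mcomp e (d m) = 0.
Proof.
case=> _ exact_mid exact_last; split.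
- by move=> k km; apply/(exact_mid k km); exists (idm _); rewrite compm1.
- by apply/exact_last; exists (idm _); rewrite compm1.
Qed.

Lemma left_nexact_mono (L : C) (e : Mor (Z m.+1) L) :
  left_nexact m Z d L e -> mono (d 0).
Proof. by case=> d0_mono _ _; apply: eq0_mono. Qed.

Lemma right_nexact_epi (L : C) (e : Mor (Z m.+1) L) :
  right_nexact m Z d L e -> epi e.
Proof. by case=> e_epi _ _; apply: eq0_epi. Qed.

Lemma left_nexact_factor :
  left_nexact m Z d (Z m.+2) (d m.+1) ->
  forall k, (k <= m)%N -> forall (W : C) (g : Mor W (Z k.+1)),
    mcomp (d k.+1) g = 0 -> exists h : Mor W (Z k), g = mcomp (d k) h.
Proof.
case=> _ exact_mid exact_last k; rewrite leq_eqVlt => /orP [/eqP -> | km] W g.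
- exact: (proj1 (exact_last W g)).
- exact: (proj1 (exact_mid k km W g)).
Qed.

Lemma right_nexact_factor :
  right_nexact m Z d (Z m.+2) (d m.+1) ->
  forall k, (k <= m)%N -> forall (W : C) (g : Mor (Z k.+1) W),
    mcomp g (d k) = 0 -> exists h : Mor (Z k.+2) W, g = mcomp h (d k.+1).
Proof.
case=> _ exact_last exact_mid k; rewrite leq_eqVlt => /orP [/eqP -> | km] W g.
- exact: (proj1 (exact_last W g)).
- exact: (proj1 (exact_mid k km W g)).
Qed.

End Exactness.

Section MappingCone.
Variables (C : AddCat) (m : nat) (X Y : nat -> C)
  (dX : forall k, Mor (X k) (X k.+1)) (dY : forall k, Mor (Y k) (Y k.+1))
  (f : forall k, Mor (X k) (Y k)).
Hypothesis f_chain :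
  forall k, (k <= m)%N -> mcomp (f k.+1) (dX k) = mcomp (dY k) (f k).

Local Notation cone := (cone_obj X Y).
Local Notation cd := (cone_d dX dY f).
Local Notation cl := (cone_last m dY f).

Lemma cone_d0E : cd 0 = col2 (- dX 0) (f 0).
Proof. by []. Qed.

Lemma cone_dSE j : cd j.+1 = col2 (row2 (- dX j.+1) 0) (row2 (f j.+1) (dY j)).
Proof. by []. Qed.

Lemma cone_lastE : cl = row2 (f m.+1) (dY m).
Proof. by []. Qed.

Lemma cone_complex :
  (forall k, (k <= m)%N -> mcomp (dX k.+1) (dX k) = 0) ->
  (forall k, (k < m)%N -> mcomp (dY k.+1) (dY k) = 0) ->
  forall j, (j < m)%N -> mcomp (cd j.+1) (cd j) = 0.
Proof.
move=> dX2 dY2 [|i] im; rewrite cone_dSE col2_comp ?cone_d0E ?cone_dSE.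
- rewrite !row2_col2 compNl compNr opprK comp0m addr0 compNr dX2 ?f_chain 1?ltnW //.
  by rewrite addNr col2_0.
- rewrite !row2_col2 !comp_row2 !comp0m !compm0 row2_0 addr0 compNl compNr opprK.
  rewrite dX2 1?ltnW // compNr row2D f_chain 1?ltnW // dY2 1?ltnW // addNr add0r.
  by rewrite !row2_0 col2_0.
Qed.

Lemma cone_last_complex :
  (forall k, (k < m)%N -> mcomp (dY k.+1) (dY k) = 0) -> mcomp cl (cd m) = 0.
Proof.
move: f_chain; rewrite cone_lastE; case: m => [|i] fc dY2.
- by rewrite cone_d0E row2_col2 compNr fc // addNr.
- rewrite cone_dSE row2_col2 !comp_row2 compm0 compNr row2D fc // dY2 //.
  by rewrite addNr addr0 row2_0.
Qed.

Lemma cone_d0_mono : mono (dX 0) -> mono (cd 0).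
Proof.
move=> dX0M; apply: eq0_mono => W g; rewrite cone_d0E col2_comp.
case/col2_eq0=> dXg0 _; apply: (mono_eq0 dX0M).
by apply/eqP; rewrite -oppr_eq0 -compNl dXg0.
Qed.

Lemma cone_cycle_factor (L : C) (e : Mor (Y m.+1) L) :
  left_nexact m X dX (X m.+2) (dX m.+1) -> left_nexact m Y dY L e ->
  forall j, (j <= m)%N -> forall (W : C) (g1 : Mor W (X j.+1)) (g2 : Mor W (Y j)),
  mcomp (dX j.+1) g1 = 0 -> mcomp (f j.+1) g1 + mcomp (dY j) g2 = 0 ->
  exists h : Mor W (cone j), col2 g1 g2 = mcomp (cd j) h.
Proof.
move=> XL YL j jm W g1 g2 dXg1 fg1; have [u g1E] := left_nexact_factor XL jm dXg1.
have dY_fu : mcomp (dY j) (mcomp (f j) u + g2) = 0.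
  by rewrite compDr Defs.compA -f_chain // -Defs.compA -g1E.
move: jm g1 g2 dXg1 fg1 u g1E dY_fu; case: j => [|i] im g1 g2 _ _ u -> dY_fu.
- exists (- u); rewrite cone_d0E col2_comp compNl compNr opprK compNr.
  move/mono_eq0/(_ _ _ dY_fu)/eqP: (left_nexact_mono YL).
  by rewrite addrC addr_eq0 => /eqP ->.
- case: YL => _ Y_exact_mid _; have [v fu_g2] := proj1 (Y_exact_mid i im W _) dY_fu.
  exists (col2 (- u) v); rewrite cone_dSE col2_comp !row2_col2 comp0m addr0.
  by rewrite compNl compNr opprK compNr -fu_g2 addrA addNr add0r.
Qed.

Lemma cone_left_nexact (dYn : Mor (Y m.+1) (X m.+2)) :
  left_nexact m X dX (X m.+2) (dX m.+1) ->
  left_nexact m Y dY (X m.+2) dYn -> mcomp dYn (f m.+1) = dX m.+1 ->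
  left_nexact m cone cd (Y m.+1) cl.
Proof.
move=> XL YL dYn_f.
have [dX2 dXlast] := left_nexact_complex XL.
have [dY2 dYlast] := left_nexact_complex YL.
have dX_complex k : (k <= m)%N -> mcomp (dX k.+1) (dX k) = 0.
  by rewrite leq_eqVlt => /orP [/eqP -> | /dX2].
have factor := cone_cycle_factor XL YL.
split.
- exact/mono_eq0/cone_d0_mono/(left_nexact_mono XL).
- move=> j jm W g; split; last first.
    by case=> h ->; rewrite Defs.compA cone_complex // comp0m.
  rewrite -(col2_pr g) cone_dSE col2_comp !row2_col2 comp0m addr0.
  case/col2_eq0 => /eqP; rewrite compNl oppr_eq0 => /eqP dXg1 fg1.
  exact: factor (ltnW jm) _ _ _ dXg1 fg1.
- move=> W g; split; last first.
    by case=> h ->; rewrite Defs.compA cone_last_complex // comp0m.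
  rewrite -(col2_pr g) cone_lastE row2_col2 => fg1; apply: factor => //.
  move/eqP: fg1; rewrite addr_eq0 => /eqP fg1.
  by rewrite -dYn_f -Defs.compA fg1 compNr Defs.compA dYlast comp0m oppr0.
Qed.

Lemma cone_last_epi (dYn : Mor (Y m.+1) (X m.+2)) :
  epi (dX m.+1) ->
  (forall (W : C) (g : Mor (Y m.+1) W),
     mcomp g (dY m) = 0 <-> exists h : Mor (X m.+2) W, g = mcomp h dYn) ->
  mcomp dYn (f m.+1) = dX m.+1 -> epi cl.
Proof.
move=> dXE YR dYn_f; apply: eq0_epi => W g.
rewrite cone_lastE comp_row2 => /row2_eq0 [gf0 gdY0].
have [u gE] := proj1 (YR W g) gdY0.
suff u0 : u = 0 by rewrite gE u0 comp0m.
by apply: dXE; rewrite comp0m -dYn_f Defs.compA -gE.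
Qed.

Lemma cone_right_nexact_Y :
  right_nexact m cone cd (Y m.+1) cl ->
  forall j, (j < m)%N -> forall (W : C) (G : Mor (cone j.+2) W),
    mcomp G (cd j.+1) = 0 ->
    exists h : Mor (Y j.+2) W, mcomp G inj2 = mcomp h (dY j.+1).
Proof.
case=> _ exact_last exact_mid j jm W G Gcd0; case: (ltnP j.+1 m) => jm'.
- have [H ->] := proj1 (exact_mid j.+1 jm' W G) Gcd0.
  exists (mcomp H inj2); rewrite -Defs.compA cone_dSE col2_comp !row2_inj2.
  by rewrite -{1}(row2_inj H) row2_col2 compm0 add0r.
- have mE : m = j.+1 by apply/eqP; rewrite eqn_leq jm' jm.
  move: exact_last; rewrite mE => /(_ W G) [exact_last _].
  have [H ->] := exact_last Gcd0.
  by exists H; rewrite -Defs.compA row2_inj2.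
Qed.

Lemma row2_dX_cone_d : mcomp (dX m.+1) (dX m) = 0 ->
  mcomp (row2 (dX m.+1) (0 : Mor (Y m) (X m.+2))) (cd m) = 0.
Proof.
case: m => [|i] dXlast.
- by rewrite cone_d0E row2_col2 compNr dXlast oppr0 comp0m addr0.
- rewrite cone_dSE row2_col2 comp0m addr0 comp_row2 compNr dXlast oppr0.
  by rewrite compm0 row2_0.
Qed.

Lemma cone_right_nexact_extension :
  right_nexact m X dX (X m.+2) (dX m.+1) ->
  mcomp (dX m.+1) (dX m) = 0 ->
  (forall k, (k < m)%N -> mcomp (dY k.+1) (dY k) = 0) ->
  right_nexact m cone cd (Y m.+1) cl ->
  exists dYn : Mor (Y m.+1) (X m.+2),
    mcomp dYn (f m.+1) = dX m.+1 /\ right_nexact m Y dY (X m.+2) dYn.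
Proof.
move=> XR dXlast dY2 coneR; have dXE := right_nexact_epi XR.
have [cl_eq0 cone_exact_last _] := coneR.
have [dYn /esym] := proj1 (cone_exact_last _ _) (row2_dX_cone_d dXlast).
rewrite cone_lastE comp_row2 => /row2_inj_eq [dYn_f dYn_dY].
exists dYn; split=> //; split.
- by move=> W g gdYn0; apply: dXE; rewrite comp0m -dYn_f Defs.compA gdYn0 comp0m.
- move=> W g; split; last by case=> h ->; rewrite -Defs.compA dYn_dY compm0.
  move=> gdY0.
  have gfdX0 : mcomp (mcomp g (f m.+1)) (dX m) = 0.
    by rewrite -Defs.compA f_chain // Defs.compA gdY0 comp0m.
  have [u gfE] := right_nexact_factor XR (leqnn m) gfdX0.
  exists u; apply/eqP; rewrite -subr_eq0; apply/eqP; apply: cl_eq0.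
  rewrite cone_lastE comp_row2 !compDl !compNl -!Defs.compA dYn_f dYn_dY.
  by rewrite -gfE compm0 gdY0 !subrr row2_0.
- move=> j jm W g; split; last by case=> h ->; rewrite -Defs.compA dY2 // compm0.
  move=> gdY0.
  have gfdX0 : mcomp (mcomp g (f j.+1)) (dX j) = 0.
    by rewrite -Defs.compA f_chain 1?ltnW // Defs.compA gdY0 comp0m.
  have [a gfE] := right_nexact_factor XR (ltnW jm) gfdX0.
  have [h] : exists h : Mor (Y j.+2) W,
      mcomp (row2 a g) inj2 = mcomp h (dY j.+1).
    apply: (cone_right_nexact_Y coneR jm).
    rewrite cone_dSE row2_col2 !comp_row2 compm0 compNr row2D -gfE addNr gdY0.
    by rewrite add0r row2_0.
  by rewrite row2_inj2; exists h.
Qed.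

End MappingCone.

Theorem mainTheorem12 (C : AddCat) (m : nat) (hC : nAbelian C m)
  (X : nat -> C) (dX : forall k, Mor (X k) (X k.+1))
  (hX : nexact m X dX (X m.+2) (dX m.+1))
  (Y : nat -> C) (dY : forall k, Mor (Y k) (Y k.+1))
  (hYc : forall k, (k < m)%N -> mcomp (dY k.+1) (dY k) = 0)
  (hY0 : mono (dY 0%N))
  (f : forall k, Mor (X k) (Y k))
  (hf : forall k, (k <= m)%N -> mcomp (f k.+1) (dX k) = mcomp (dY k) (f k)) :
  [<-> right_nexact m (cone_obj X Y) (cone_d dX dY f) (Y m.+1) (cone_last m dY f);
       nexact m (cone_obj X Y) (cone_d dX dY f) (Y m.+1) (cone_last m dY f);
       right_nexact m (cone_obj X Y) (cone_d dX dY f) (Y m.+1) (cone_last m dY f)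
       /\ left_nexact m (cone_obj X Y) (cone_d dX dY f) (Y m.+1) (cone_last m dY f);
       exists dYn : Mor (Y m.+1) (X m.+2),
         mcomp dYn (f m.+1) = dX m.+1 /\ nexact m Y dY (X m.+2) dYn].
Proof.
case: hC => _ _ _ mono_nexact epi_nexact; case: hX => XR XL.
have [_ dXlast] := left_nexact_complex XL.
tfae.
- move=> coneR; apply: mono_nexact coneR.
  exact/cone_d0_mono/(left_nexact_mono XL).
- by [].
- case=> /(cone_right_nexact_extension hf XR dXlast hYc) [dYn [dYn_f YR]] _.
  by exists dYn; split=> //; apply: mono_nexact.
- case=> dYn [dYn_f [[_ Y_exact_last _] YL]].
  have coneL := cone_left_nexact hf XL YL dYn_f.
  have clE := cone_last_epi (right_nexact_epi XR) Y_exact_last dYn_f.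
  by case: (epi_nexact _ _ _ _ clE coneL).
Qed.
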